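(* Let $X,Y$ be real Hilbert spaces and $a:X\times Y\to\mathbb{R}\cup\{+\infty\}$ such that for every $y\in Y$ the function $a(\cdot,y)$ is proper and $\Phi_{lsc}$-convex on $X$, and for every $x\in X$ the function $a(x,\cdot)$ is concave on $Y$. Suppose that for every $\beta<\inf_{x\in X}\sup_{y\in Y}a(x,y)$ and every $\varepsilon>0$ there exist $y_1,y_2\in Y$ and $\bar x\in X$ with $\bar x\in\mathrm{dom}\,a(\cdot,y_1)\cap\mathrm{dom}\,a(\cdot,y_2)$, $a(\bar x,y_1)\ge\beta$, $a(\bar x,y_2)\ge\beta$, such that $a(\cdot,y_1)$ and $a(\cdot,y_2)$ satisfy $ZS(\varepsilon,\bar x)$. Then $\sup_{y\in Y}\inf_{x\in X}a(x,y)=\inf_{x\in X}\sup_{y\in Y}a(x,y)$.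
   Context: $\Phi_{lsc}$ is the class of functions $\varphi(x)=-a\|x\|^2+\langle v,x\rangle+c$ ($a\ge0$, $v\in X^*$, $c\in\mathbb{R}$); $\mathrm{supp}(f)=\{\varphi\in\Phi_{lsc}:\varphi\le f\}$; $f$ is $\Phi_{lsc}$-convex if $f=\sup\mathrm{supp}(f)$ pointwise; proper means $\mathrm{supp}(f)\ne\emptyset$ and $\mathrm{dom}(f)\ne\emptyset$. For $\varepsilon\ge0$, $\partial^\varepsilon_{lsc}f(\bar x)$ is the set of $(a,v)\in\mathbb{R}_+\times X^*$ with $f(x)-f(\bar x)\ge\langle v,x-\bar x\rangle-a\|x\|^2+a\|\bar x\|^2-\varepsilon$ for all $x\in X$. Functions $f,g$ satisfy $ZS(\varepsilon,\bar x)$ if $0=(0,0)\in\mathrm{co}(\partial^\varepsilon_{lsc}f(\bar x)\cup\partial^\varepsilon_{lsc}g(\bar x))$, convex hull in $\mathbb{R}\times X^*$. *)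

From Stdlib Require Import Reals List.
Import ListNotations.
Open Scope R_scope.
Set Implicit Arguments.

Inductive Rbar : Type := Fin (r : R) | p_infty | m_infty.

Definition Rbar_le (x y : Rbar) : Prop :=
  match x, y with
  | m_infty, _ => True
  | _, p_infty => True
  | Fin a, Fin b => a <= b
  | _, _ => False
  end.

Definition Rbar_lt (x y : Rbar) : Prop := Rbar_le x y /\ x <> y.

Definition is_sup (S : Rbar -> Prop) (l : Rbar) : Prop :=
  (forall z, S z -> Rbar_le z l) /\
  (forall u, (forall z, S z -> Rbar_le z u) -> Rbar_le l u).
Definition is_inf (S : Rbar -> Prop) (l : Rbar) : Prop :=
  (forall z, S z -> Rbar_le l z) /\
  (forall u, (forall z, S z -> Rbar_le u z) -> Rbar_le u l).

Record HilbertSpace : Type := {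
  hcar :> Type;
  hzero : hcar;
  hadd : hcar -> hcar -> hcar;
  hopp : hcar -> hcar;
  hscal : R -> hcar -> hcar;
  hinner : hcar -> hcar -> R;
  hadd_assoc : forall x y z, hadd x (hadd y z) = hadd (hadd x y) z;
  hadd_comm : forall x y, hadd x y = hadd y x;
  hadd_zero : forall x, hadd x hzero = x;
  hadd_opp : forall x, hadd x (hopp x) = hzero;
  hscal_assoc : forall a b x, hscal a (hscal b x) = hscal (a * b) x;
  hscal_one : forall x, hscal 1 x = x;
  hscal_distr_l : forall a x y, hscal a (hadd x y) = hadd (hscal a x) (hscal a y);
  hscal_distr_r : forall a b x, hscal (a + b) x = hadd (hscal a x) (hscal b x);
  hinner_sym : forall x y, hinner x y = hinner y x;
  hinner_add : forall x y z, hinner (hadd x y) z = hinner x z + hinner y z;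
  hinner_scal : forall a x y, hinner (hscal a x) y = a * hinner x y;
  hinner_pos : forall x, 0 <= hinner x x;
  hinner_def : forall x, hinner x x = 0 -> x = hzero;
  hcomplete : forall u : nat -> hcar,
    (forall eps, 0 < eps -> exists N, forall m n, (N <= m)%nat -> (N <= n)%nat ->
        sqrt (hinner (hadd (u m) (hopp (u n))) (hadd (u m) (hopp (u n)))) < eps) ->
    exists l, forall eps, 0 < eps -> exists N, forall n, (N <= n)%nat ->
        sqrt (hinner (hadd (u n) (hopp l)) (hadd (u n) (hopp l))) < eps
}.

Definition hsub {X : HilbertSpace} (x y : X) : X := hadd X x (hopp X y).
Definition hnorm2 {X : HilbertSpace} (x : X) : R := hinner X x x.
Definition hnorm {X : HilbertSpace} (x : X) : R := sqrt (hnorm2 x).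

Record Dual (X : HilbertSpace) : Type := {
  dfun :> X -> R;
  dfun_add : forall x y, dfun (hadd X x y) = dfun x + dfun y;
  dfun_scal : forall a x, dfun (hscal X a x) = a * dfun x;
  dfun_bounded : exists M, forall x, Rabs (dfun x) <= M * hnorm x
}.

Definition phi_lsc {X : HilbertSpace} (a : R) (v : Dual X) (c : R) (x : X) : R :=
  - a * hnorm2 x + v x + c.

Definition in_supp {X : HilbertSpace} (f : X -> Rbar) (a : R) (v : Dual X) (c : R) : Prop :=
  0 <= a /\ forall x, Rbar_le (Fin (phi_lsc a v c x)) (f x).

Definition Phi_lsc_convex {X : HilbertSpace} (f : X -> Rbar) : Prop :=
  forall x, is_sup (fun z => exists a v c, in_supp f a v c /\ z = Fin (phi_lsc a v c x)) (f x).

Definition in_dom {X : HilbertSpace} (f : X -> Rbar) (x : X) : Prop := f x <> p_infty.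

Definition proper {X : HilbertSpace} (f : X -> Rbar) : Prop :=
  (exists a v c, in_supp f a v c) /\ (exists x, in_dom f x).

(* concavity on Y of an R ∪ {+oo}-valued function: convex hypograph *)
Definition concave {Y : HilbertSpace} (g : Y -> Rbar) : Prop :=
  forall (y1 y2 : Y) (t r1 r2 : R), 0 <= t <= 1 ->
    Rbar_le (Fin r1) (g y1) -> Rbar_le (Fin r2) (g y2) ->
    Rbar_le (Fin (t * r1 + (1 - t) * r2))
            (g (hadd Y (hscal Y t y1) (hscal Y (1 - t) y2))).

(* (a,v) in the eps-subdifferential of f at xb
   (empty if f xb is not finite; only used at points of dom f) *)
Definition eps_subdiff {X : HilbertSpace} (eps : R) (f : X -> Rbar) (xb : X)
    (a : R) (v : Dual X) : Prop :=
  0 <= a /\ exists fxb, f xb = Fin fxb /\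
    forall x, Rbar_le (Fin (fxb + v (hsub x xb) - a * hnorm2 x + a * hnorm2 xb - eps)) (f x).

(* ZS(eps, xb): (0,0) belongs to the convex hull (finite convex combinations)
   of the union of the two eps-subdifferentials, in R x X^* *)
Definition ZS {X : HilbertSpace} (eps : R) (f g : X -> Rbar) (xb : X) : Prop :=
  exists l : list (R * (R * Dual X)),
    Forall (fun p => 0 <= fst p /\
               (eps_subdiff eps f xb (fst (snd p)) (snd (snd p)) \/
                eps_subdiff eps g xb (fst (snd p)) (snd (snd p)))) l /\
    fold_right Rplus 0 (map fst l) = 1 /\
    fold_right Rplus 0 (map (fun p => fst p * fst (snd p)) l) = 0 /\
    forall x : X, fold_right Rplus 0 (map (fun p : R * (R * Dual X) => fst p * dfun (snd (snd p)) x) l) = 0.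

Definition is_inf_sup {X Y : HilbertSpace} (a : X -> Y -> Rbar) (I : Rbar) : Prop :=
  is_inf (fun z => exists x, is_sup (fun w => exists y, w = a x y) z) I.
Definition is_sup_inf {X Y : HilbertSpace} (a : X -> Y -> Rbar) (S : Rbar) : Prop :=
  is_sup (fun z => exists y, is_inf (fun w => exists x, w = a x y) z) S.

From Stdlib Require Import Reals List Lra Classical.
Open Scope R_scope.
Set Implicit Arguments.
Unset Strict Implicit.

(* Weak duality [sup inf <= inf sup] is pure order theory.  For the converse,
   fix [beta < inf sup] and [eps > 0] and take the points [y1, y2, xb] of the
   hypothesis.  Each (a_i, v_i) in an eps-subdifferential at [xb] yields the
   quadratic minorant [beta + v_i (x - xb) - a_i |x|^2 + a_i |xb|^2 - eps] of
   [a(., y1)] or [a(., y2)]; weighting them by the ZS certificate, the linear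
   and quadratic parts cancel, leaving [beta - eps <= t a(x, y1) + (1 - t) a(x, y2)]
   for all [x].  Concavity in [y] turns this into [beta - eps <= a(x, y_t)] at
   [y_t = t y1 + (1 - t) y2], so [beta - eps <= sup inf]. *)

Lemma Rbar_le_trans (x y z : Rbar) : Rbar_le x y -> Rbar_le y z -> Rbar_le x z.
Proof. destruct x, y, z; simpl; intros; try lra; tauto. Qed.

Lemma Rbar_le_antisym (x y : Rbar) : Rbar_le x y -> Rbar_le y x -> x = y.
Proof. destruct x, y; simpl; intros; try tauto; try (f_equal; lra); reflexivity. Qed.

Lemma Rbar_fin_le_of_neq_m_infty (z : Rbar) : z <> m_infty -> exists r, Rbar_le (Fin r) z.
Proof.
  destruct z as [r| |]; intros Hz; [exists r; simpl; lra | exists 0; exact I | congruence].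
Qed.

Lemma Rbar_le_of_approx (I S : Rbar) :
  (forall b eps, Rbar_lt (Fin b) I -> 0 < eps -> Rbar_le (Fin (b - eps)) S) ->
  Rbar_le I S.
Proof.
  intro H. destruct I as [i| |]; destruct S as [s| |]; simpl; auto.
  - apply Rnot_lt_le; intro Hlt.
    assert (K : (s + i) / 2 - (i - s) / 4 <= s).
    { apply (H ((s + i) / 2) ((i - s) / 4));
        [split; [simpl; lra | intro E; injection E; lra] | lra]. }
    lra.
  - apply (H (i - 1) 1); [split; [simpl; lra | intro E; injection E; lra] | lra].
  - assert (K : (s + 2) - 1 <= s).
    { apply (H (s + 2) 1); [split; [exact I | discriminate] | lra]. }
    lra.
  - apply (H 0 1); [split; [exact I | discriminate] | lra].
Qed.

Section Infimum.

Variable E : Rbar -> Prop.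

Definition lower_bound (r : R) : Prop := forall z, E z -> Rbar_le (Fin r) z.

Lemma is_inf_p_infty : (forall r, lower_bound r) -> is_inf E p_infty.
Proof.
  intros Hall; split.
  - intros z Hz; destruct z as [s| |]; simpl; auto.
    + specialize (Hall (s + 1) _ Hz); simpl in Hall; lra.
    + exact (Hall 0 _ Hz).
  - intros u _; destruct u; exact I.
Qed.

Lemma is_inf_m_infty : (forall r, ~ lower_bound r) -> is_inf E m_infty.
Proof.
  intros Hnone; split; [intros; exact I |].
  intros u Hu; destruct u as [r| |]; simpl; auto.
  - exact (Hnone r Hu).
  - apply (Hnone 0); intros z Hz; exact (@Rbar_le_trans (Fin 0) p_infty z I (Hu z Hz)).
Qed.

Lemma is_inf_fin (r0 r1 : R) :
  lower_bound r0 -> ~ lower_bound r1 -> exists m, is_inf E (Fin m).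
Proof.
  intros H0 H1.
  destruct (not_all_ex_not _ _ H1) as [z Hz].
  apply imply_to_and in Hz as [Ez Hnz].
  destruct z as [s| |]; [| now elim Hnz | now specialize (H0 _ Ez)].
  assert (Hbd : bound lower_bound) by (exists s; intros q Hq; exact (Hq _ Ez)).
  destruct (completeness _ Hbd (ex_intro _ r0 H0)) as [m [Hub Hlub]].
  exists m; split.
  - intros w Ew; destruct w as [t| |].
    + apply Hlub; intros q Hq; exact (Hq _ Ew).
    + exact I.
    + exact (H0 _ Ew).
  - intros u Hu; destruct u as [q| |].
    + exact (Hub q Hu).
    + apply Hnz, Rbar_le_trans with p_infty; [exact I | exact (Hu _ Ez)].
    + exact I.
Qed.

Lemma is_inf_exists : exists l, is_inf E l.
Proof.
  destruct (classic (forall r, lower_bound r)) as [Hall | Hsome].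
  - exact (ex_intro _ _ (is_inf_p_infty Hall)).
  - destruct (not_all_ex_not _ _ Hsome) as [r1 Hr1].
    destruct (classic (exists r0, lower_bound r0)) as [[r0 Hr0] | Hnone].
    + destruct (is_inf_fin Hr0 Hr1) as [m Hm]; exact (ex_intro _ _ Hm).
    + apply ex_intro with m_infty, is_inf_m_infty.
      intros r Hr; exact (Hnone (ex_intro _ r Hr)).
Qed.

End Infimum.

Lemma is_sup_inf_le_is_inf_sup (X Y : HilbertSpace) (a : X -> Y -> Rbar) (S I : Rbar) :
  is_sup_inf a S -> is_inf_sup a I -> Rbar_le S I.
Proof.
  intros HS HI. apply (proj2 HI). intros z [x Hz]. apply (proj2 HS). intros w [y Hw].
  apply Rbar_le_trans with (a x y).
  - apply (proj1 Hw). exists x; reflexivity.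
  - apply (proj1 Hz). exists y; reflexivity.
Qed.

Lemma Rmax_weighted (m lam r c : R) :
  0 <= m -> 0 <= lam -> m * r + lam * c <= (m + lam) * Rmax r c.
Proof.
  intros Hm Hl.
  assert (m * r <= m * Rmax r c) by (apply Rmult_le_compat_l; [exact Hm | apply Rmax_l]).
  assert (lam * c <= lam * Rmax r c) by (apply Rmult_le_compat_l; [exact Hl | apply Rmax_r]).
  lra.
Qed.

Lemma Rbar_fin_le_Rmax (r c : R) (z : Rbar) :
  Rbar_le (Fin r) z -> Rbar_le (Fin c) z -> Rbar_le (Fin (Rmax r c)) z.
Proof. intros; apply Rmax_case; assumption. Qed.

Definition lsum {A : Type} (w : A -> R) (l : list A) : R := fold_right Rplus 0 (map w l).

(* Minorants of the same function are merged into their pointwise maximum. *)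
Lemma weighted_minorants_le_comb (T J : Type) (f g : T -> Rbar) (c : J -> T -> R)
  (Hf : forall x, f x <> m_infty) (Hg : forall x, g x <> m_infty)
  (l : list (R * J))
  (Hl : Forall (fun p => 0 <= fst p /\
          ((forall x, Rbar_le (Fin (c (snd p) x)) (f x)) \/
           (forall x, Rbar_le (Fin (c (snd p) x)) (g x)))) l) :
  exists m1 m2, 0 <= m1 /\ 0 <= m2 /\ m1 + m2 = lsum fst l /\
    forall x, exists r1 r2, Rbar_le (Fin r1) (f x) /\ Rbar_le (Fin r2) (g x) /\
      lsum (fun p => fst p * c (snd p) x) l <= m1 * r1 + m2 * r2.
Proof.
  unfold lsum.
  induction Hl as [| [lam j] l [Hlam Hside] _ [m1 [m2 [Hm1 [Hm2 [Hsum IH]]]]]];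
    cbn [fold_right map fst snd] in *.
  - exists 0, 0; split; [lra | split; [lra | split; [lra |]]].
    intro x.
    destruct (Rbar_fin_le_of_neq_m_infty (Hf x)) as [r1 H1].
    destruct (Rbar_fin_le_of_neq_m_infty (Hg x)) as [r2 H2].
    exists r1, r2; split; [exact H1 | split; [exact H2 | lra]].
  - destruct Hside as [Hcf | Hcg].
    + exists (m1 + lam), m2; split; [lra | split; [lra | split; [lra |]]].
      intro x; destruct (IH x) as [r1 [r2 [H1 [H2 H3]]]].
      exists (Rmax r1 (c j x)), r2.
      split; [apply Rbar_fin_le_Rmax; [exact H1 | apply Hcf] | split; [exact H2 |]].
      pose proof (Rmax_weighted r1 (c j x) Hm1 Hlam); lra.
    + exists m1, (m2 + lam); split; [lra | split; [lra | split; [lra |]]].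
      intro x; destruct (IH x) as [r1 [r2 [H1 [H2 H3]]]].
      exists r1, (Rmax r2 (c j x)).
      split; [exact H1 | split; [apply Rbar_fin_le_Rmax; [exact H2 | apply Hcg] |]].
      pose proof (Rmax_weighted r2 (c j x) Hm2 Hlam); lra.
Qed.

Section SubdifferentialMinorant.

Variables (X : HilbertSpace) (eps beta : R) (xb : X).

Definition subgrad_minorant (p : R * Dual X) (x : X) : R :=
  beta + snd p (hsub x xb) - fst p * hnorm2 x + fst p * hnorm2 xb - eps.

Lemma eps_subdiff_minorant (f : X -> Rbar) (al : R) (v : Dual X) :
  Rbar_le (Fin beta) (f xb) -> eps_subdiff eps f xb al v ->
  forall x, Rbar_le (Fin (subgrad_minorant (al, v) x)) (f x).
Proof.
  intros Hb [_ [fxb [Hfxb Hsub]]] x.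
  rewrite Hfxb in Hb; simpl in Hb.
  apply Rbar_le_trans with (Fin (fxb + v (hsub x xb) - al * hnorm2 x + al * hnorm2 xb - eps));
    [unfold subgrad_minorant; simpl; lra | apply Hsub].
Qed.

Lemma lsum_subgrad_minorant (l : list (R * (R * Dual X))) (x : X) :
  lsum (fun p => fst p * subgrad_minorant (snd p) x) l =
  (beta - eps) * lsum fst l
  + lsum (fun p : R * (R * Dual X) => fst p * snd (snd p) (hsub x xb)) l
  - lsum (fun p => fst p * fst (snd p)) l * (hnorm2 x - hnorm2 xb).
Proof.
  unfold lsum; induction l as [| p l IH]; simpl; [ring |].
  rewrite IH; unfold subgrad_minorant; ring.
Qed.

Lemma ZS_convex_comb_ge (f g : X -> Rbar)
  (Hf : forall x, f x <> m_infty) (Hg : forall x, g x <> m_infty) :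
  Rbar_le (Fin beta) (f xb) -> Rbar_le (Fin beta) (g xb) -> ZS eps f g xb ->
  exists t, 0 <= t <= 1 /\ forall x, exists r1 r2,
    Rbar_le (Fin r1) (f x) /\ Rbar_le (Fin r2) (g x) /\
    beta - eps <= t * r1 + (1 - t) * r2.
Proof.
  intros Hbf Hbg [l [Hl [Hw [Ha Hv]]]].
  assert (Hmin : Forall (fun p => 0 <= fst p /\
    ((forall x, Rbar_le (Fin (subgrad_minorant (snd p) x)) (f x)) \/
     (forall x, Rbar_le (Fin (subgrad_minorant (snd p) x)) (g x)))) l).
  { refine (Forall_impl _ _ Hl); intros [lam [al v]] [Hlam Hside]; split; [exact Hlam |].
    destruct Hside; [left | right]; apply eps_subdiff_minorant; assumption. }
  destruct (weighted_minorants_le_comb Hf Hg Hmin) as [m1 [m2 [Hm1 [Hm2 [Hsum Hc]]]]].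
  exists m1; split; [unfold lsum in Hsum; lra |].
  intro x; destruct (Hc x) as [r1 [r2 [H1 [H2 H3]]]].
  exists r1, r2; repeat split; auto.
  rewrite lsum_subgrad_minorant in H3; unfold lsum in *.
  rewrite Hw, Ha, (Hv (hsub x xb)) in *.
  replace (1 - m1) with m2 by (unfold lsum in Hsum; lra); lra.
Qed.

End SubdifferentialMinorant.

Theorem mainTheorem13 (X Y : HilbertSpace) (a : X -> Y -> Rbar)
  (Ha_val : forall x y, a x y <> m_infty)
  (Ha_x : forall y : Y, proper (fun x => a x y) /\ Phi_lsc_convex (fun x => a x y))
  (Ha_y : forall x : X, concave (a x))
  (Hzs : forall I, is_inf_sup a I ->
     forall beta eps : R, Rbar_lt (Fin beta) I -> 0 < eps ->
     exists (y1 y2 : Y) (xb : X),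
       in_dom (fun x => a x y1) xb /\ in_dom (fun x => a x y2) xb /\
       Rbar_le (Fin beta) (a xb y1) /\ Rbar_le (Fin beta) (a xb y2) /\
       ZS eps (fun x => a x y1) (fun x => a x y2) xb) :
  forall S I, is_sup_inf a S -> is_inf_sup a I -> S = I.
Proof.
  intros S I HS HI.
  apply Rbar_le_antisym; [exact (is_sup_inf_le_is_inf_sup HS HI) |].
  apply Rbar_le_of_approx; intros beta eps Hbeta Heps.
  destruct (Hzs I HI beta eps Hbeta Heps) as [y1 [y2 [xb [_ [_ [B1 [B2 HZS]]]]]]].
  destruct (ZS_convex_comb_ge (fun x => Ha_val x y1) (fun x => Ha_val x y2) B1 B2 HZS)
    as [t [Ht Hcomb]].
  set (yt := hadd Y (hscal Y t y1) (hscal Y (1 - t) y2)).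
  destruct (is_inf_exists (fun w => exists x, w = a x yt)) as [z Hz].
  apply Rbar_le_trans with z; [| apply (proj1 HS); exists yt; exact Hz].
  apply (proj2 Hz); intros w [x ->].
  destruct (Hcomb x) as [r1 [r2 [R1 [R2 R3]]]].
  apply Rbar_le_trans with (Fin (t * r1 + (1 - t) * r2)); [exact R3 |].
  exact (Ha_y x y1 y2 t r1 r2 Ht R1 R2).
Qed.
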